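(* Let $y\in\mathbb{R}^{k+1}$, $y\neq0$, let $T$ be any point on the line through the origin $O$ and $y$ with $T\neq y$, and let $\delta=|T-y|$. Then $$\omega(x,y)=\frac{|T|}{\delta}\quad\text{for all } x \text{ with } |x-T|=\delta,\ x\neq y .$$
   Context: For $x\neq y$ in $\mathbb{R}^{k+1}$, the spherical ratio of two points is $\omega(x,y)=\left|\dfrac{|x|^2-|y|^2}{|x-y|^2}\right|$; $|T|=|OT|$ is the distance from the origin to $T$. *)

From mathcomp Require Import all_boot all_order all_algebra.
Set Implicit Arguments. Unset Strict Implicit. Unset Printing Implicit Defensive.
Import Order.TTheory GRing.Theory Num.Theory.
Local Open Scope ring_scope.

Definition sqnorm (R : rcfType) (n : nat) (x : 'rV[R]_n) : R :=
  \sum_(i < n) x 0 i ^+ 2.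

Definition enorm (R : rcfType) (n : nat) (x : 'rV[R]_n) : R :=
  Num.sqrt (sqnorm x).

Definition omega (R : rcfType) (n : nat) (x y : 'rV[R]_n) : R :=
  `| (sqnorm x - sqnorm y) / sqnorm (x - y) |.

From mathcomp Require Import all_boot all_order all_algebra.
From mathcomp Require Import ring.
Import Order.TTheory GRing.Theory Num.Theory.
Local Open Scope ring_scope.

(* Write T = t y.  Expanding |x - T|^2 = |T - y|^2 with the inner product gives
   |x|^2 = 2t <x,y> + (1 - 2t) |y|^2, hence
   |x|^2 - |y|^2 = t c  and  |x - y|^2 = (t - 1) c  with  c = 2 (<x,y> - |y|^2).
   So omega(x,y) = |t| / |t - 1|, which is also |T| / |T - y|. *)

Definition dotp {R : rcfType} {n : nat} (x y : 'rV[R]_n) : R :=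
  \sum_(i < n) x 0 i * y 0 i.

Section EuclideanNorm.

Variables (R : rcfType) (n : nat).
Implicit Types (x y : 'rV[R]_n) (a : R).

Lemma sqnorm_ge0 x : 0 <= sqnorm x.
Proof. by apply: sumr_ge0 => i _; rewrite sqr_ge0. Qed.

Lemma sqnorm_eq0 x : (sqnorm x == 0) = (x == 0).
Proof.
apply/idP/eqP => [|->]; last by rewrite /sqnorm big1 // => i _; rewrite mxE expr0n.
rewrite /sqnorm psumr_eq0 => [/allP x0|i _]; last exact: sqr_ge0.
apply/matrixP => i j; rewrite (ord1 i) mxE.
by apply/eqP; rewrite -sqrf_eq0; exact: x0 (mem_index_enum j).
Qed.

Lemma sqnormZ a x : sqnorm (a *: x) = a ^+ 2 * sqnorm x.
Proof. by rewrite /sqnorm mulr_sumr; apply: eq_bigr => i _; rewrite mxE exprMn. Qed.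

Lemma sqnormB x y : sqnorm (x - y) = sqnorm x - 2 * dotp x y + sqnorm y.
Proof.
rewrite /sqnorm /dotp mulr_sumr -sumrB -big_split /=.
by apply: eq_bigr => i _; rewrite !mxE; ring.
Qed.

Lemma dotpZr a x y : dotp x (a *: y) = a * dotp x y.
Proof. by rewrite /dotp mulr_sumr; apply: eq_bigr => i _; rewrite mxE mulrCA. Qed.

Lemma enormZ a x : enorm (a *: x) = `|a| * enorm x.
Proof. by rewrite /enorm sqnormZ sqrtrM ?sqr_ge0 // sqrtr_sqr. Qed.

Lemma enorm_eq0 x : (enorm x == 0) = (x == 0).
Proof. by rewrite /enorm sqrtr_eq0 -sqnorm_eq0 eq_le sqnorm_ge0 andbT. Qed.

Lemma eq_sqnorm_enorm x y : enorm x = enorm y -> sqnorm x = sqnorm y.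
Proof. by move/eqP; rewrite eqr_sqrt ?sqnorm_ge0 // => /eqP. Qed.

(* Cross-multiplied form of omega(x,y) = t / (t - 1); it needs no
   nondegeneracy hypothesis. *)
Lemma sqnorm_diff_on_sphere t x y :
  sqnorm (x - t *: y) = sqnorm ((t - 1) *: y) ->
  (t - 1) * (sqnorm x - sqnorm y) = t * sqnorm (x - y).
Proof.
rewrite !sqnormB !sqnormZ dotpZr => hx.
apply/eqP; rewrite -subr_eq0.
have -> : (t - 1) * (sqnorm x - sqnorm y) - t * (sqnorm x - 2 * dotp x y + sqnorm y)
  = (t - 1) ^+ 2 * sqnorm y - (sqnorm x - 2 * (t * dotp x y) + t ^+ 2 * sqnorm y).
  by ring.
by rewrite hx subrr.
Qed.

End EuclideanNorm.

Theorem lemma1 (R : rcfType) (k : nat) (y T : 'rV[R]_(k.+1)) :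
  y != 0 ->
  (exists t : R, T = t *: y) ->
  T != y ->
  forall x : 'rV[R]_(k.+1),
    enorm (x - T) = enorm (T - y) -> x != y ->
    omega x y = enorm T / enorm (T - y).
Proof.
move=> y0 [t ->] Ty x.
have -> : t *: y - y = (t - 1) *: y by rewrite scalerBl scale1r.
move=> /eq_sqnorm_enorm hx xy.
have t1 : t - 1 != 0 by apply: contra Ty; rewrite subr_eq0 => /eqP ->; rewrite scale1r.
have dxy : sqnorm (x - y) != 0 by rewrite sqnorm_eq0 subr_eq0.
have ey : enorm y != 0 by rewrite enorm_eq0.
have -> : omega x y = `|t / (t - 1)|.
  congr `|_|; apply/eqP; rewrite eqr_div //.
  by rewrite mulrC sqnorm_diff_on_sphere.
by rewrite !enormZ normf_div -mulf_div divff ?mulr1.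
Qed.
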